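(* Let $\sigma,\tau$ be edge-faces and $[\mathcal{F}],[\mathcal{E}]$ two $\mathrm{PGL}(4)$-classes of tetrahedra of flags. Then $[\mathcal{F}],[\mathcal{E}]$ are $(\sigma,\tau)$-glueable if and only if $t^{\mathcal{F}}_\sigma t^{\mathcal{E}}_\tau=1$. Moreover, if they are $(\sigma,\tau)$-glueable then they are $(\sigma',\tau')$-glueable for all $\sigma'\in\{\sigma,\sigma_+,\sigma_-\}$ and $\tau'\in\{\tau,\tau_+,\tau_-\}$.
   Context: Flags: $(V,\eta)$, $\eta$ a plane of $\mathbb{RP}^3$ through $V$; $\mathrm{PGL}(4)$ acts diagonally. A tetrahedron of flags is a non-degenerate ($\eta_i(V_j)=0\iff i=j$) ordered quadruple $(V_m,\eta_m)_{m=1}^4$ with $V_m$ not coplanar such that some projective tetrahedron with vertices $V_m$ has interior disjoint from all $\eta_m$. Edge-faces $\sigma=(ij)k$ are even permutations $[ijkl]$ of $\{1,2,3,4\}$; $\sigma_+=(ki)j$, $\sigma_-=(jk)i$. Triple ratio $t_\sigma=t_{ijk}=\frac{\bar\eta_i(\bar V_j)\bar\eta_j(\bar V_k)\bar\eta_k(\bar V_i)}{\bar\eta_i(\bar V_k)\bar\eta_j(\bar V_i)\bar\eta_k(\bar V_j)}$. Two tetrahedra of flags $\mathcal{F}=(V_m,\eta_m)$, $\mathcal{E}=(W_m,\zeta_m)$ are glued along $(\sigma,\tau)$, with $\sigma=(ij)k$, $\tau=(i'j')k'$, if $(V_i,\eta_i)=(W_{j'},\zeta_{j'})$, $(V_j,\eta_j)=(W_{i'},\zeta_{i'})$,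 $(V_k,\eta_k)=(W_{k'},\zeta_{k'})$. Two classes are $(\sigma,\tau)$-glueable if they have representatives glued along $(\sigma,\tau)$. *)

(* Real projective 3-space modelled over an arbitrary
   real (ordered) field R; points and planes are nonzero row vectors in R^4
   taken up to nonzero scalars. *)
From HB Require Import structures.
From mathcomp Require Import all_boot all_order all_algebra all_fingroup.
Set Implicit Arguments. Unset Strict Implicit. Unset Printing Implicit Defensive.
Import Order.TTheory GRing.Theory Num.Theory.
Local Open Scope ring_scope.

Section Flags.
Variable R : realFieldType.

(* a flag (V, eta): V a point-vector, eta a plane-covector *)
Definition flag := ('rV[R]_4 * 'rV[R]_4)%type.

Definition pair (e v : 'rV[R]_4) : R := \sum_(i < 4) e 0 i * v 0 i.

Definition is_flag (f : flag) : Prop :=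
  f.1 != 0 /\ f.2 != 0 /\ pair f.2 f.1 = 0.

Definition flag_eq (f f' : flag) : Prop :=
  (exists c : R, c != 0 /\ f.1 = c *: f'.1) /\
  (exists d : R, d != 0 /\ f.2 = d *: f'.2).

(* action of g in GL(4) (descending to PGL(4)); covectors transform by the
   inverse transpose so that pair is preserved *)
Definition act (g : 'M[R]_4) (f : flag) : flag :=
  (f.1 *m g, f.2 *m (invmx g)^T).

Definition tetra_act (g : 'M[R]_4) (F : 'I_4 -> flag) : 'I_4 -> flag :=
  fun m => act g (F m).

(* tetrahedron of flags; indices 1,2,3,4 of the paper are 0,1,2,3 here *)
Definition is_tetra (F : 'I_4 -> flag) : Prop :=
  (forall m, is_flag (F m)) /\
  (forall i j : 'I_4, pair (F i).2 (F j).1 = 0 <-> i = j) /\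
  \det (\matrix_(i < 4, j < 4) (F i).1 0 j) != 0 /\
  (* some projective tetrahedron with vertices V_m (chosen by lifts c_m V_m)
     has interior {sum a_m c_m V_m | a_m > 0} disjoint from every plane eta_k *)
  (exists c : 'I_4 -> R, (forall m, c m != 0) /\
     forall (k : 'I_4) (a : 'I_4 -> R), (forall m, 0 < a m) ->
       pair (F k).2 (\sum_(m < 4) (a m * c m) *: (F m).1) != 0).

(* edge-faces sigma = (ij)k, encoded as the triple (i,j,k) *)
Definition edge_face := ('I_4 * 'I_4 * 'I_4)%type.

Definition is_edge_face (s : edge_face) : Prop :=
  exists p : 'S_4, ~~ odd_perm p /\
    p (@Ordinal 4 0 isT) = s.1.1 /\ p (@Ordinal 4 1 isT) = s.1.2 /\
    p (@Ordinal 4 2 isT) = s.2.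

Definition ef_plus (s : edge_face) : edge_face := (s.2, s.1.1, s.1.2).
Definition ef_minus (s : edge_face) : edge_face := (s.1.2, s.2, s.1.1).

Definition triple_ratio (F : 'I_4 -> flag) (s : edge_face) : R :=
  let: (i, j, k) := s in
  (pair (F i).2 (F j).1 * pair (F j).2 (F k).1 * pair (F k).2 (F i).1) /
  (pair (F i).2 (F k).1 * pair (F j).2 (F i).1 * pair (F k).2 (F j).1).

Definition glued (F E : 'I_4 -> flag) (s t : edge_face) : Prop :=
  let: (i, j, k) := s in
  let: (i', j', k') := t in
  flag_eq (F i) (E j') /\ flag_eq (F j) (E i') /\ flag_eq (F k) (E k').

Definition glueable (F E : 'I_4 -> flag) (s t : edge_face) : Prop :=
  exists g h : 'M[R]_4, g \in unitmx /\ h \in unitmx /\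
    glued (tetra_act g F) (tetra_act h E) s t.

End Flags.

(* The pairing eta(V) is invariant under PGL(4) and the triple ratio is
   homogeneous of degree 0 in the chosen lifts, so gluing along ((ij)k, (i'j')k')
   forces t^F_(ij)k = t^E_(j'i')k' = (t^E_(i'j')k')^-1.
   Conversely, write g = V_F^-1 T V_E with V the matrices of vertices and T
   fixing the first three coordinate axes up to scalars c_m while sending the
   last axis to an arbitrary u.  Such a g matches three flags of F with three
   of E once the 3x3 arrays of pairings among them are related by row and column
   scalings, which is possible exactly when their cyclic ratios agree, and u solves
   a linear system whose determinant N + D is nonzero because the triple ratio
   N / D of a tetrahedron of flags is positive: a face plane cannot separate the
   vertices off it.  Finally sigma_+ and sigma_- have the same triple ratio as
   sigma. *)

From Pilot Require Import Defs.
From HB Require Import structures.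
From mathcomp Require Import all_boot all_order all_algebra all_fingroup.
From mathcomp Require Import ring lra.
Set Implicit Arguments. Unset Strict Implicit. Unset Printing Implicit Defensive.
Import Order.TTheory GRing.Theory Num.Theory.
Local Open Scope ring_scope.

Local Notation o0 := (@Ordinal 4 0 isT).
Local Notation o1 := (@Ordinal 4 1 isT).
Local Notation o2 := (@Ordinal 4 2 isT).
Local Notation o3 := (@Ordinal 4 3 isT).

Lemma ord4_ind (P : 'I_4 -> Prop) : P o0 -> P o1 -> P o2 -> P o3 -> forall j, P j.
Proof.
by move=> P0 P1 P2 P3 [[|[|[|[|//]]]] hj]; rewrite (eq_irrelevance hj isT).
Qed.

Section TetrahedraOfFlags.
Variable R : realFieldType.
Implicit Types (e v : 'rV[R]_4) (x y z : flag R) (F E X Y : 'I_4 -> flag R).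

Lemma sum_ord4 (f : 'I_4 -> R) : \sum_(i < 4) f i = f o0 + f o1 + f o2 + f o3.
Proof.
rewrite !big_ord_recl big_ord0 addr0 !addrA.
by congr (_ + _ + _ + _); congr f; apply: val_inj.
Qed.

Lemma pairE e v : pair e v = (e *m v^T) 0 0.
Proof. by rewrite /pair mxE; apply: eq_bigr => i _; rewrite mxE. Qed.

Lemma pair_act (g : 'M[R]_4) e v : g \in unitmx ->
  pair (e *m (invmx g)^T) (v *m g) = pair e v.
Proof.
move=> gu; rewrite !pairE trmx_mul -mulmxA (mulmxA _ g^T) -trmx_mul.
by rewrite mulmxV // trmx1 mul1mx.
Qed.

Lemma pairZl c e v : pair (c *: e) v = c * pair e v.
Proof. by rewrite !pairE -scalemxAl mxE. Qed.

Lemma pairZr c e v : pair e (c *: v) = c * pair e v.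
Proof. by rewrite !pairE linearZ /= -scalemxAr mxE. Qed.

Lemma pair_lincomb e (a : 'I_4 -> R) (w : 'I_4 -> 'rV[R]_4) :
  pair e (\sum_(m < 4) a m *: w m) = \sum_(m < 4) a m * pair e (w m).
Proof.
rewrite /pair.
under eq_bigr => i _ do rewrite summxE big_distrr.
rewrite exchange_big /=; apply: eq_bigr => m _.
rewrite big_distrr /=; apply: eq_bigr => i _.
by rewrite mxE mulrCA.
Qed.

Definition flag_triple_ratio x y z : R :=
  (pair x.2 y.1 * pair y.2 z.1 * pair z.2 x.1) /
  (pair x.2 z.1 * pair y.2 x.1 * pair z.2 y.1).

Lemma triple_ratioE F i j k :
  triple_ratio F (i, j, k) = flag_triple_ratio (F i) (F j) (F k).
Proof. by []. Qed.

Lemma flag_triple_ratio_act (g : 'M[R]_4) x y z : g \in unitmx ->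
  flag_triple_ratio (Defs.act g x) (Defs.act g y) (Defs.act g z) =
  flag_triple_ratio x y z.
Proof. by move=> gu; rewrite /flag_triple_ratio /Defs.act /= !pair_act. Qed.

Lemma flag_triple_ratio_eq x y z x' y' z' :
  flag_eq x x' -> flag_eq y y' -> flag_eq z z' ->
  flag_triple_ratio x y z = flag_triple_ratio x' y' z'.
Proof.
case: x y z => [? ?] [? ?] [? ?].
move=> [[c1 [h1 /= ->]] [d1 [k1 /= ->]]] [[c2 [h2 /= ->]] [d2 [k2 /= ->]]]
  [[c3 [h3 /= ->]] [d3 [k3 /= ->]]].
rewrite /flag_triple_ratio /= !pairZl !pairZr.
set P1 := pair _ _; set P2 := pair _ _; set P3 := pair _ _.
set Q1 := pair _ _; set Q2 := pair _ _; set Q3 := pair _ _.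
set s := d1 * c2 * (d2 * c3) * (d3 * c1).
have s0 : s != 0 by rewrite !mulf_neq0.
have -> : d1 * (c2 * P1) * (d2 * (c3 * P2)) * (d3 * (c1 * P3)) = s * (P1 * P2 * P3).
  by rewrite /s; ring.
have -> : d1 * (c3 * Q1) * (d2 * (c1 * Q2)) * (d3 * (c2 * Q3)) = s * (Q1 * Q2 * Q3).
  by rewrite /s; ring.
by rewrite invfM mulrACA mulfV // mul1r.
Qed.

Lemma flag_triple_ratio_swap x y z :
  flag_triple_ratio y x z = (flag_triple_ratio x y z)^-1.
Proof. by rewrite /flag_triple_ratio invf_div; congr (_ / _); ring. Qed.

Lemma triple_ratio_plus F s : triple_ratio F (ef_plus s) = triple_ratio F s.
Proof. by case: s => [[i j] k]; rewrite /triple_ratio /=; congr (_ / _); ring. Qed.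

Lemma triple_ratio_minus F s : triple_ratio F (ef_minus s) = triple_ratio F s.
Proof. by case: s => [[i j] k]; rewrite /triple_ratio /=; congr (_ / _); ring. Qed.

Lemma pos_lincomb2 (u w t : R) : u * w < 0 ->
  exists a b : R, [/\ 0 < a, 0 < b & a * u + b * w = t].
Proof.
wlog u_gt0 : u w t / 0 < u => [hwlog uw|uw].
  have u0 : u != 0 by apply: contraTneq uw => ->; rewrite mul0r ltxx.
  case: (ltrgtP u 0) u0 => // [u_lt0|u_gt0] _; last exact: hwlog.
  have := hwlog (- u) (- w) (- t); rewrite oppr_gt0 mulrNN.
  move=> /(_ u_lt0 uw) [a [b [a_gt0 b_gt0 e]]].
  by exists a, b; split => //; apply: oppr_inj; rewrite -e; ring.
have w_lt0 : w < 0 by rewrite -(pmulr_rlt0 _ u_gt0).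
have t_le : t <= `|t| := ler_norm t.
have t_ge : 0 <= `|t| := normr_ge0 t.
exists ((1 + `|t|) / u), ((1 + `|t| - t) / - w); split.
- by rewrite divr_gt0 //; lra.
- by rewrite divr_gt0 ?oppr_gt0 //; lra.
- by field; rewrite ltr0_neq0 // lt0r_neq0.
Qed.

Lemma pos_lincomb_eq0 n (z : 'I_n -> R) p q : z p * z q < 0 ->
  exists2 a : 'I_n -> R, (forall m, 0 < a m) & \sum_(m < n) a m * z m = 0.
Proof.
move=> zpq; have pq : p != q.
  by apply: contraTneq zpq => ->; rewrite -expr2 ltNge sqr_ge0.
set S := \sum_(m < n | (m != p) && (m != q)) z m.
have [ap [aq [ap_gt0 aq_gt0 e]]] := pos_lincomb2 (- S) zpq.
exists (fun m => if m == p then ap else if m == q then aq else 1).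
  by move=> m; case: (m == p) => //; case: (m == q).
have qp : (q == p) = false by rewrite eq_sym (negPf pq).
rewrite (bigD1 p) //= (bigD1 q) 1?eq_sym //= !eqxx qp addrA e -[RHS](addNr S).
congr (_ + _).
by apply: eq_bigr => m /andP[/negPf -> /negPf ->]; rewrite mul1r.
Qed.

Lemma tetra_pair_eq0 F i : is_tetra F -> pair (F i).2 (F i).1 = 0.
Proof. by move=> [_ [H _]]; apply/H. Qed.

Lemma tetra_pair_neq0 F i j : is_tetra F -> i != j -> pair (F i).2 (F j).1 != 0.
Proof. by move=> [_ [H _]] ij; apply/eqP => /H /eqP; rewrite (negPf ij). Qed.

(* The lifts [c] are those of the tetrahedron whose interior misses all faces. *)
Lemma tetra_face_sign F : is_tetra F ->
  exists2 c : 'I_4 -> R, (forall m, c m != 0) &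
  forall k p q, p != k -> q != k ->
    0 < c p * pair (F k).2 (F p).1 * (c q * pair (F k).2 (F q).1).
Proof.
move=> HF; have [_ [_ [_ [c [c0 interior]]]]] := HF.
exists c => // k p q pk qk.
pose z m := c m * pair (F k).2 (F m).1.
have zp0 : z p != 0 by rewrite mulf_neq0 // tetra_pair_neq0 // eq_sym.
have zq0 : z q != 0 by rewrite mulf_neq0 // tetra_pair_neq0 // eq_sym.
rewrite -/(z p) -/(z q) lt_def mulf_neq0 //= leNgt; apply/negP => zpq.
have [a a_gt0 az] := pos_lincomb_eq0 zpq.
apply/negP: (interior k a a_gt0); rewrite negbK pair_lincomb; apply/eqP.
by rewrite -[RHS]az; apply: eq_bigr => m _; rewrite mulrA.
Qed.

Lemma tetra_triple_ratio_gt0 F i j k : is_tetra F ->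
  i != j -> j != k -> i != k -> 0 < triple_ratio F (i, j, k).
Proof.
move=> HF ij jk ik; have [c c0 sign] := tetra_face_sign HF.
have [ji kj ki] : [/\ j != i, k != j & k != i].
  by rewrite eq_sym ij eq_sym jk eq_sym ik.
rewrite triple_ratioE /flag_triple_ratio.
set N := (X in X / _); set D := (X in _ / X).
have D0 : D != 0 by rewrite !mulf_neq0 // tetra_pair_neq0.
have ND : 0 < N * D * (c i * c j * c k) ^+ 2.
  have := mulr_gt0 (mulr_gt0 (sign i j k ji ki) (sign j k i kj ij)) (sign k i j ik jk).
  by congr (0 < _); rewrite /N /D; ring.
rewrite pmulr_lgt0 ?exprn_even_gt0 //= ?mulf_neq0 // in ND.
have -> : N / D = N * D / D ^+ 2 by field.
by rewrite divr_gt0 // exprn_even_gt0.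
Qed.

Definition vertex_mx X : 'M[R]_4 := \matrix_(i < 4, j < 4) (X i).1 0 j.

Lemma row_vertex_mx X r : row r (vertex_mx X) = (X r).1.
Proof. by apply/rowP => j; rewrite !mxE. Qed.

Lemma pair_vertex_mx X e j : (e *m (vertex_mx X)^T) 0 j = pair e (X j).1.
Proof. by rewrite mxE; apply: eq_bigr => l _; rewrite !mxE. Qed.

Lemma tetra_vertex_mx_unit F : is_tetra F -> vertex_mx F \in unitmx.
Proof. by move=> [_ [_ [det0 _]]]; rewrite unitmxE unitfE. Qed.

Lemma is_tetra_perm F (p : 'S_4) : is_tetra F -> is_tetra (fun r => F (p r)).
Proof.
move=> [flagF [incidF [detF [c [c0 interior]]]]].
split=> //; split; [|split].
- by move=> i j; rewrite incidF; split=> [/perm_inj|->].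
- have -> : \matrix_(i < 4, j < 4) (F (p i)).1 0 j = row_perm p (vertex_mx F).
    by apply/matrixP => i j; rewrite !mxE.
  by rewrite row_permE det_mulmx det_perm mulf_neq0 // signr_eq0.
- exists (fun m => c (p m)); split=> // k a a_gt0.
  have := interior (p k) (fun m => a ((p^-1)%g m)) (fun m => a_gt0 _).
  by rewrite (reindex_inj (@perm_inj _ p)) /=; under eq_bigr do rewrite permK.
Qed.

Definition frame_mx (c u : 'I_4 -> R) : 'M[R]_4 :=
  \matrix_(i, j) if i == o3 then u j else (i == j)%:R * c i.

Lemma frame_mx_unit c u : (forall i, c i != 0) -> u o3 != 0 ->
  frame_mx c u \in unitmx.
Proof.
move=> c0 u3; rewrite unitmxE det_trig.
  rewrite unitfE !big_ord_recl big_ord0 !mxE /= !mul1r mulr1 !mulf_neq0 //.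
  by move: u3; congr (u _ != 0); apply: val_inj.
apply/is_trig_mxP => i j ij; have /negPf ij_neq : i != j by rewrite neq_ltn ij.
rewrite mxE ij_neq mul0r; case: eqP => // i3.
by move: ij; rewrite i3 ltnNge -ltnS ltn_ord.
Qed.

Lemma row_frame_mx c u r : r != o3 -> row r (frame_mx c u) = c r *: delta_mx 0 r.
Proof.
by move=> /negPf r3; apply/rowP => j; rewrite !mxE r3 eqxx eq_sym mulrC.
Qed.

Lemma mul_tr_frame_mx c u (w : 'rV[R]_4) j :
  (w *m (frame_mx c u)^T) 0 j =
  if j == o3 then \sum_l w 0 l * u l else c j * w 0 j.
Proof.
rewrite mxE; under eq_bigr => l _ do rewrite !mxE.
case: eqP => // _; rewrite (bigD1 j) //= eqxx mul1r big1 ?addr0 1?mulrC //.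
by move=> l /negPf; rewrite eq_sym => ->; rewrite mul0r mulr0.
Qed.

Lemma act_frame_flag_eq X Y c u r (d : R) :
  vertex_mx X \in unitmx -> vertex_mx Y \in unitmx -> frame_mx c u \in unitmx ->
  r != o3 -> c r != 0 -> d != 0 ->
  (forall j, pair (X r).2 (X j).1 = d * (if j == o3
     then \sum_l pair (Y r).2 (Y l).1 * u l else c j * pair (Y r).2 (Y j).1)) ->
  flag_eq (Defs.act (invmx (vertex_mx X) *m frame_mx c u *m vertex_mx Y) (X r))
          (Y r).
Proof.
move=> uX uY uT r3 cr0 d0 hpair.
set g := invmx (vertex_mx X) *m frame_mx c u *m vertex_mx Y.
have ug : g \in unitmx by rewrite !unitmx_mul unitmx_inv uX uT uY.
split; [exists (c r) | exists d]; split=> //=.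
  rewrite -row_vertex_mx rowE /g !mulmxA mulmxK // -rowE row_frame_mx //.
  by rewrite -scalemxAl -rowE row_vertex_mx.
have hcov : (X r).2 *m (vertex_mx X)^T =
    d *: ((Y r).2 *m (vertex_mx Y)^T *m (frame_mx c u)^T).
  apply/rowP => j; rewrite pair_vertex_mx hpair [RHS]mxE mul_tr_frame_mx.
  congr (_ * _); case: eqP => _; [apply: eq_bigr => l _|]; congr (_ * _);
  exact/esym/pair_vertex_mx.
have hX : (X r).2 = d *: ((Y r).2 *m g^T).
  have uXt : (vertex_mx X)^T \in unitmx by rewrite unitmx_tr.
  rewrite -[(X r).2](mulmxK uXt) hcov /g !trmx_mul trmx_inv.
  by rewrite -!scalemxAl !mulmxA.
by rewrite hX -scalemxAl -mulmxA -trmx_mul mulVmx // trmx1 mulmx1.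
Qed.

Lemma cyclic_rescale (a b : 'I_4 -> 'I_4 -> R) :
  (forall r j, r != j -> a r j != 0) -> (forall r j, r != j -> b r j != 0) ->
  a o0 o1 * a o1 o2 * a o2 o0 / (a o0 o2 * a o1 o0 * a o2 o1) =
  b o0 o1 * b o1 o2 * b o2 o0 / (b o0 o2 * b o1 o0 * b o2 o1) ->
  exists c d : 'I_4 -> R, [/\ forall r, c r != 0, forall r, d r != 0 &
    forall r j, r != o3 -> j != o3 -> r != j -> a r j = d r * (c j * b r j)].
Proof.
move=> a0 b0 ratio_eq.
have {}ratio_eq : a o0 o1 * a o1 o2 * a o2 o0 * (b o0 o2 * b o1 o0 * b o2 o1) =
    b o0 o1 * b o1 o2 * b o2 o0 * (a o0 o2 * a o1 o0 * a o2 o1).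
  by apply/eqP; rewrite -eqr_div ?mulf_neq0 ?a0 ?b0 // ratio_eq.
pose d0 := a o0 o2 / b o0 o2; pose d1 := a o1 o2 / b o1 o2.
pose c1 := a o0 o1 / (d0 * b o0 o1); pose c0 := a o1 o0 / (d1 * b o1 o0).
pose d2 := a o2 o0 / (c0 * b o2 o0).
exists (fun j => [:: c0; c1; 1; 1]`_j), (fun r => [:: d0; d1; d2; 1]`_r).
split.
- by apply: ord4_ind; rewrite /= ?oner_neq0 // !(mulf_neq0, invr_eq0, a0, b0).
- by apply: ord4_ind; rewrite /= ?oner_neq0 // !(mulf_neq0, invr_eq0, a0, b0).
apply: ord4_ind; apply: ord4_ind => //= _ _ _; rewrite /d2 /c0 /c1 /d1 /d0;
  last first.
  rewrite (_ : a o2 o1 = b o0 o1 * b o1 o2 * b o2 o0 *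
    (a o0 o2 * a o1 o0 * a o2 o1) / (b o0 o1 * b o1 o2 * b o2 o0 *
    (a o0 o2 * a o1 o0))); first rewrite -ratio_eq.
all: by field; rewrite ?(mulf_neq0, a0, b0).
Qed.

(* The nondegeneracy condition is the determinant of the hollow 3x3 block. *)
Lemma hollow_affine_solve (b : 'I_4 -> 'I_4 -> R) (t : 'I_4 -> R) :
  (forall r, b r r = 0) ->
  b o0 o1 * b o1 o2 * b o2 o0 + b o0 o2 * b o1 o0 * b o2 o1 != 0 ->
  exists2 u : 'I_4 -> R, u o3 = 1 &
    forall r, r != o3 -> \sum_l b r l * u l = t r.
Proof.
move=> b_diag D0.
pose s0 := t o0 - b o0 o3; pose s1 := t o1 - b o1 o3; pose s2 := t o2 - b o2 o3.
pose D := b o0 o1 * b o1 o2 * b o2 o0 + b o0 o2 * b o1 o0 * b o2 o1.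
pose x0 := (- s0 * b o1 o2 * b o2 o1 + b o0 o1 * b o1 o2 * s2
            + b o0 o2 * b o2 o1 * s1) / D.
pose x1 := (s0 * b o1 o2 * b o2 o0 + b o0 o2 * b o1 o0 * s2
            - b o0 o2 * b o2 o0 * s1) / D.
pose x2 := (- b o0 o1 * b o1 o0 * s2 + b o0 o1 * b o2 o0 * s1
            + s0 * b o1 o0 * b o2 o1) / D.
exists (fun l => [:: x0; x1; x2; 1]`_l) => //.
apply: ord4_ind => //= _; rewrite sum_ord4 /= !b_diag /x0 /x1 /x2 /s0 /s1 /s2 /D;
  by field.
Qed.

Lemma addr_neq0_of_div_gt0 (x y : R) : 0 < x / y -> x + y != 0.
Proof.
move=> xy_gt0; have y0 : y != 0.
  by apply: contraTneq xy_gt0 => ->; rewrite invr0 mulr0 ltxx.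
apply: contraTneq xy_gt0 => /eqP; rewrite addr_eq0 => /eqP ->.
by rewrite mulNr divff // ltr0N1.
Qed.

Lemma tetra_flags_transitive X Y : is_tetra X -> is_tetra Y ->
  triple_ratio X (o0, o1, o2) = triple_ratio Y (o0, o1, o2) ->
  exists2 g : 'M[R]_4, g \in unitmx &
    forall r, r != o3 -> flag_eq (Defs.act g (X r)) (Y r).
Proof.
move=> HX HY ratio_eq.
pose a r j := pair (X r).2 (X j).1; pose b r j := pair (Y r).2 (Y j).1.
have [c [d [c0 d0 hab]]] := @cyclic_rescale a b
  (fun r j => tetra_pair_neq0 HX) (fun r j => tetra_pair_neq0 HY) ratio_eq.
have D0 : b o0 o1 * b o1 o2 * b o2 o0 + b o0 o2 * b o1 o0 * b o2 o1 != 0.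
  exact: addr_neq0_of_div_gt0 (@tetra_triple_ratio_gt0 Y o0 o1 o2 HY isT isT isT).
have [u u3 hu] := @hollow_affine_solve b (fun r => a r o3 / d r)
  (fun r => tetra_pair_eq0 r HY) D0.
have uX := tetra_vertex_mx_unit HX; have uY := tetra_vertex_mx_unit HY.
have uT : frame_mx c u \in unitmx by rewrite frame_mx_unit // u3 oner_neq0.
exists (invmx (vertex_mx X) *m frame_mx c u *m vertex_mx Y).
  by rewrite !unitmx_mul unitmx_inv uX uT uY.
move=> r r3; apply: (act_frame_flag_eq (d := d r)) => // j.
case: eqP => [->|/eqP j3]; first by rewrite hu // mulrC divfK.
have [<-|rj] := eqVneq r j; first by rewrite !tetra_pair_eq0 // !mulr0.
exact: hab.
Qed.

Lemma act1 (f : flag R) : Defs.act 1%:M f = f.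
Proof. by case: f => v e; rewrite /Defs.act /= invmx1 trmx1 !mulmx1. Qed.

Lemma glueable_triple_ratio F E i j k i' j' k' :
  glueable F E (i, j, k) (i', j', k') ->
  triple_ratio F (i, j, k) = triple_ratio E (j', i', k').
Proof.
move=> [g [h [ug [uh [Fi [Fj Fk]]]]]].
rewrite !triple_ratioE -(flag_triple_ratio_act _ _ _ ug).
by rewrite -[RHS](flag_triple_ratio_act _ _ _ uh); apply: flag_triple_ratio_eq.
Qed.

Lemma glueable_of_triple_ratio F E (p q : 'S_4) : is_tetra F -> is_tetra E ->
  triple_ratio F (p o0, p o1, p o2) = triple_ratio E (q o1, q o0, q o2) ->
  glueable F E (p o0, p o1, p o2) (q o0, q o1, q o2).
Proof.
move=> HF HE ratio_eq; pose q' := (tperm o0 o1 * q)%g.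
have [q'0 q'1 q'2] : [/\ q' o0 = q o1, q' o1 = q o0 & q' o2 = q o2].
  by rewrite !permM tpermL tpermR tpermD.
have ratio_perm : triple_ratio (fun r => F (p r)) (o0, o1, o2) =
    triple_ratio (fun r => E (q' r)) (o0, o1, o2).
  by rewrite !triple_ratioE q'0 q'1 q'2.
have [g ug hg] :=
  tetra_flags_transitive (is_tetra_perm p HF) (is_tetra_perm q' HE) ratio_perm.
exists g, 1%:M; split=> //; split; first exact: unitmx1.
by rewrite /glued /tetra_act !act1 -q'0 -q'1 -q'2; split; [|split]; apply: hg.
Qed.

Lemma edge_faceP s : is_edge_face s -> exists p : 'S_4, s = (p o0, p o1, p o2).
Proof. by case: s => [[i j] k] [p [_ [/= <- [<- <-]]]]; exists p. Qed.

Lemma edge_face_plus s : is_edge_face s -> is_edge_face (ef_plus s).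
Proof.
move=> [p [even_p [p0 [p1 p2]]]]; exists (tperm o1 o2 * tperm o0 o2 * p)%g.
by rewrite !odd_permM !odd_tperm even_p !permM !permE.
Qed.

Lemma edge_face_minus s : is_edge_face s -> is_edge_face (ef_minus s).
Proof.
move=> [p [even_p [p0 [p1 p2]]]]; exists (tperm o0 o2 * tperm o1 o2 * p)%g.
by rewrite !odd_permM !odd_tperm even_p !permM !permE.
Qed.

Lemma edge_face_rotate F s s' : is_edge_face s ->
  (s' = s \/ s' = ef_plus s \/ s' = ef_minus s) ->
  is_edge_face s' /\ triple_ratio F s' = triple_ratio F s.
Proof.
move=> s_ef [->|[->|->]]; split; rewrite ?triple_ratio_plus ?triple_ratio_minus //.
  exact: edge_face_plus.
exact: edge_face_minus.
Qed.

Lemma glueableP F E s t :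
  is_edge_face s -> is_edge_face t -> is_tetra F -> is_tetra E ->
  glueable F E s t <-> triple_ratio F s * triple_ratio E t = 1.
Proof.
move=> /edge_faceP[p ->] /edge_faceP[q ->] HF HE.
have tE0 : triple_ratio E (q o0, q o1, q o2) != 0.
  by rewrite lt0r_neq0 // tetra_triple_ratio_gt0 // (inj_eq perm_inj).
have swapE : triple_ratio E (q o1, q o0, q o2) =
    (triple_ratio E (q o0, q o1, q o2))^-1 := flag_triple_ratio_swap _ _ _.
split=> [/glueable_triple_ratio ->|prod1]; first by rewrite swapE mulVf.
apply: glueable_of_triple_ratio => //; rewrite swapE.
by apply: (mulIf tE0); rewrite prod1 mulVf.
Qed.

End TetrahedraOfFlags.

Theorem lemma3p1 (R : realFieldType) (F E : 'I_4 -> flag R)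
    (s t : edge_face) :
  is_edge_face s -> is_edge_face t -> is_tetra F -> is_tetra E ->
  (glueable F E s t <-> triple_ratio F s * triple_ratio E t = 1) /\
  (glueable F E s t ->
     forall s' t' : edge_face,
       (s' = s \/ s' = ef_plus s \/ s' = ef_minus s) ->
       (t' = t \/ t' = ef_plus t \/ t' = ef_minus t) ->
       glueable F E s' t').
Proof.
move=> s_ef t_ef HF HE; split; first exact: glueableP.
move=> /(glueableP s_ef t_ef HF HE) prod1 s' t' s's t't.
have [s'_ef ratio_s'] := edge_face_rotate F s_ef s's.
have [t'_ef ratio_t'] := edge_face_rotate E t_ef t't.
by apply/glueableP => //; rewrite ratio_s' ratio_t'.
Qed.
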